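(* Let $G$ be a finite group and $p$ a prime with $\gcd(p-1,|G|)=1$. If $|G'|=p^2$ and $|G'\cap Z(G)|=p$, then $G$ is nilpotent of class $3$; in particular $G\cong P\times A$, where $A$ is an abelian group and $P$ is a $p$-group with $|P'|=p^2$ and $|P'\cap Z(P)|=p$.
   Context: $G'$ denotes the commutator subgroup and $Z(G)$ the center of $G$. *)

From mathcomp Require Import all_boot all_fingroup all_solvable.

(* With N := G' ∩ Z(G), the quotient G'/N has prime order p, so
   the conjugation action of G on it lands in Aut(C_p), of order p - 1; as
   p - 1 is coprime to |G| the action is trivial, i.e. [G', G] ⊆ N ⊆ Z(G).
   Hence G has class at most 3, and exactly 3 because G' is not central.  A
   nilpotent group is the direct product of its Sylow p-subgroup P and its
   Hall p'-subgroup A; since G' is a p-group, A' = 1 and P' = G'. *)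

From mathcomp Require Import all_boot all_fingroup all_solvable.
Set Implicit Arguments. Unset Strict Implicit. Unset Printing Implicit Defensive.
Local Open Scope group_scope.

Lemma cent_cyclic_coprime_totient (gT : finGroupType) (G H : {group gT}) :
  cyclic H -> G \subset 'N(H) -> coprime (totient #|H|) #|G| ->
  G \subset 'C(H).
Proof.
move=> cycH nHG coHG; rewrite -ker_conj_aut kerE -sub_morphim_pre //.
rewrite subG1 trivg_card1.
have dvd_G : #|conj_aut H @* G| %| #|G| by apply: dvdn_morphim.
have dvd_AutH : #|conj_aut H @* G| %| totient #|H|.
  by rewrite -card_Aut_cyclic // cardSg ?Aut_conj_aut.
by have := coprime_dvdr dvd_G (coprime_dvdl dvd_AutH coHG); rewrite /coprime gcdnn.
Qed.

Lemma commg_sub_cyclic_quotient (gT : finGroupType) (G K N : {group gT}) :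
  N <| G -> K <| G -> cyclic (K / N) ->
  coprime (totient #|K / N|) #|G| -> [~: K, G] \subset N.
Proof.
move=> /andP[_ nNG] /andP[sKG nKG] cycKN coKN.
rewrite -quotient_cents2 ?(subset_trans sKG) // centsC.
apply: cent_cyclic_coprime_totient; rewrite ?quotient_norms //.
by apply: coprime_dvdr coKN; apply: dvdn_morphim.
Qed.

Lemma nil_class_eq3 (gT : finGroupType) (G : {group gT}) :
  [~: G^`(1), G] \subset 'Z(G) -> ~~ (G^`(1) \subset 'Z(G)) ->
  nilpotent G /\ nil_class G = 3.
Proof.
move=> sL3Z ncentG'.
have le3 : nil_class G <= 3 by rewrite nil_class3 lcnSn lcn2.
have gt2 : 2 < nil_class G by rewrite ltnNge nil_class2.
split; first exact: small_nil_class (leq_trans le3 _).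
by apply/eqP; rewrite eqn_leq le3.
Qed.

Lemma setI_center_dprod (gT : finGroupType) (A H K G : {group gT}) :
  H \x K = G -> A \subset H -> A :&: 'Z(H) = A :&: 'Z(G).
Proof.
move=> defG sAH.
have sHG : H \subset G by rewrite -(dprodW defG) mulG_subl.
have sZHZG : 'Z(H) \subset 'Z(G).
  by rewrite -(dprodW (center_dprod defG)) mulG_subl.
apply/eqP; rewrite eqEsubset setIS //= subsetI subsetIl /= subsetI.
rewrite (subset_trans (subsetIl _ _) sAH) /=.
by rewrite (subset_trans (subsetIr _ _)) // (subset_trans (subsetIr _ _)) ?centS.
Qed.

Section NilpotentWithPGroupDerived.

Variables (gT : finGroupType) (G : {group gT}) (p : nat).
Hypotheses (nilG : nilpotent G) (pG' : p.-group G^`(1)).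

Let defG : 'O_p(G) \x 'O_p^'(G) = G := nilpotent_pcoreC p nilG.

Lemma der1_pcoreC_trivial : 'O_p^'(G)^`(1) = 1.
Proof.
have /dprodW defG' := der_dprod 1 defG.
apply/trivgP; rewrite -(coprime_TIg (pnat_coprime pG' (pcore_pgroup _ G))).
by rewrite subsetI der_sub andbT -defG' mulG_subr.
Qed.

Lemma abelian_pcoreC : abelian 'O_p^'(G).
Proof. exact/derG1P/der1_pcoreC_trivial. Qed.

Lemma der1_pcore : 'O_p(G)^`(1) = G^`(1).
Proof.
have /dprodW defG' := der_dprod 1 defG.
by rewrite -defG' der1_pcoreC_trivial mulg1.
Qed.

End NilpotentWithPGroupDerived.

Theorem lemma2p2 (gT : finGroupType) (G : {group gT}) (p : nat) :
  prime p -> coprime p.-1 #|G| ->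
  #|G^`(1)| = (p ^ 2)%N -> #|G^`(1) :&: 'Z(G)| = p ->
  (nilpotent G /\ nil_class G = 3%N) /\
  exists (P A : {group gT}),
    [/\ P \x A = G, abelian A, p.-group P,
        #|P^`(1)| = (p ^ 2)%N & #|P^`(1) :&: 'Z(P)| = p].
Proof.
move=> pr_p coG cardG' cardN.
set N := G^`(1) :&: 'Z(G) in cardN.
have nsNG : N <| G by rewrite normalI ?der_normal ?center_normal.
have sNG' : N \subset G^`(1) by apply: subsetIl.
have cardG'N : #|G^`(1) / N| = p.
  rewrite card_quotient ?(subset_trans (der_sub 1 G)) ?normal_norm //.
  by rewrite -divgS // cardG' cardN expnS expn1 mulnK ?prime_gt0.
have sRN : [~: G^`(1), G] \subset N.
  apply: commg_sub_cyclic_quotient; rewrite ?der_normal //.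
    by rewrite prime_cyclic ?cardG'N.
  by rewrite cardG'N totient_prime.
have sRZ : [~: G^`(1), G] \subset 'Z(G) by rewrite (subset_trans sRN) ?subsetIr.
have ncentG' : ~~ (G^`(1) \subset 'Z(G)).
  apply/negP=> /setIidPl defN; move: cardN; rewrite /N defN cardG'.
  by rewrite -{2}(expn1 p) => /eqP; rewrite eqn_exp2l ?prime_gt1.
have [nilG class3] := nil_class_eq3 sRZ ncentG'.
have pG' : p.-group G^`(1) by rewrite /pgroup cardG' pnatX pnat_id.
have defG := nilpotent_pcoreC p nilG.
have sG'P : G^`(1) \subset 'O_p(G) by rewrite -(der1_pcore nilG pG') der_sub.
split=> //; exists 'O_p(G)%G, 'O_p^'(G)%G.
by rewrite /= der1_pcore // (setI_center_dprod defG sG'P) abelian_pcoreC ?pcore_pgroup.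
Qed.
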